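(* Let $F$ be an algebraically closed field with $\operatorname{char}F=3$, $R=F[[x,y]]$, and let $f\in R^2$ be a unimodal isolated complete intersection singularity with $\operatorname{ord}(f)=3$. Then $j_3(f)$ is contact equivalent (under the $3$-jet contact group acting on $R^2/\mathfrak m^4R^2$) to one of $(x^3,0)$, $(x^3,x^2y)$, $(x^3,xy^2)$, $(x^3,y^3+xy^2)$, $(x^3,y^3+x^2y)$, $(x^3,y^3)$, $(x^2y,0)$, $(x^2y,xy^2)$, $(x^2y,x^3+xy^2)$, $(x^2y,y^3+xy^2)$, $(x^3+x^2y,\,y^3+\lambda xy^2)$ with $\lambda\neq 1$, $(x^3+xy^2,0)$.
   Context: $\mathfrak m=\langle x,y\rangle$. ICIS: $f_1,f_2\in\mathfrak m$ a regular sequence with $\mathfrak m^k\subset\langle f_1,f_2\rangle+I_2(J(f))$ for some $k$. $\operatorname{ord}(f)=\min\operatorname{ord}f_i$. $j_3(f)$ is the image in $J_3=R^2/\mathfrak m^4R^2$, on which $\mathcal K_3=\{(j_3(U),j_3(\phi))\}$ ($U\in GL(2,R)$, $\phi\in\operatorname{Aut}(R)$) acts by $j_3(f)\mapsto j_3(U\cdot\phi(f))$. Unimodal means $\mathcal K$-modality $1$ (modality in the sense of Arnold, Greuel–Nguyen, of a sufficiently high jet under the contact jet group). *)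

From mathcomp Require Import all_boot all_order all_algebra.
Unset Printing Implicit Defensive.
Import GRing.Theory.
Local Open Scope ring_scope.

Section Defs.
Variable F : closedFieldType.

(* a power series is its coefficient function: g i j = coeff of x^i y^j *)
Definition ps := nat -> nat -> F.

Definition pzero : ps := fun _ _ => 0.
Definition pconst (c : F) : ps := fun i j => if (i == 0)%N && (j == 0)%N then c else 0.
Definition pone : ps := pconst 1.
Definition padd (f g : ps) : ps := fun i j => f i j + g i j.
Definition pneg (f : ps) : ps := fun i j => - f i j.
Definition pscale (c : F) (f : ps) : ps := fun i j => c * f i j.
Definition pmul (f g : ps) : ps := fun i j =>
  \sum_(a < i.+1) \sum_(b < j.+1) f a b * g (i - a)%N (j - b)%N.
Definition mono (a b : nat) : ps :=
  fun i j => if (i == a) && (j == b) then 1 else 0.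
Definition pdx (f : ps) : ps := fun i j => i.+1%:R * f i.+1 j.
Definition pdy (f : ps) : ps := fun i j => j.+1%:R * f i j.+1.

Definition in_mpow (k : nat) (g : ps) : Prop :=
  forall i j, (i + j < k)%N -> g i j = 0.

Definition o0 : 'I_2 := ord0.
Definition o1 : 'I_2 := ord_max.
Definition vec2 (a b : ps) : 'I_2 -> ps := fun i => if i == o0 then a else b.

Definition pmat := 'I_2 -> 'I_2 -> ps.
Definition mat_vec (U : pmat) (g : 'I_2 -> ps) : 'I_2 -> ps :=
  fun i => padd (pmul (U i o0) (g o0)) (pmul (U i o1) (g o1)).
Definition mat_mul (U V : pmat) : pmat :=
  fun i k => padd (pmul (U i o0) (V o0 k)) (pmul (U i o1) (V o1 k)).
Definition mat_one : pmat := fun i k => if i == k then pone else pzero.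
Definition GL2 (U : pmat) : Prop :=
  exists V : pmat, mat_mul U V = mat_one /\ mat_mul V U = mat_one.

Definition is_aut (phi : ps -> ps) : Prop :=
  (forall a b, phi (padd a b) = padd (phi a) (phi b)) /\
  (forall a b, phi (pmul a b) = pmul (phi a) (phi b)) /\
  (forall c a, phi (pscale c a) = pscale c (phi a)) /\
  phi pone = pone /\
  (exists psi : ps -> ps, cancel phi psi /\ cancel psi phi).

Definition kact (U : pmat) (phi : ps -> ps) (f : 'I_2 -> ps) : 'I_2 -> ps :=
  mat_vec U (fun i => phi (f i)).

Definition jacdet (f : 'I_2 -> ps) : ps :=
  padd (pmul (pdx (f o0)) (pdy (f o1))) (pneg (pmul (pdy (f o0)) (pdx (f o1)))).

Definition regular_seq (f1 f2 : ps) : Prop :=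
  (forall a, pmul a f1 = pzero -> a = pzero) /\
  (forall a, (exists b, pmul a f2 = pmul b f1) -> exists c, a = pmul c f1) /\
  ~ (exists a b, padd (pmul a f1) (pmul b f2) = pone).

Definition ICIS (f : 'I_2 -> ps) : Prop :=
  in_mpow 1 (f o0) /\ in_mpow 1 (f o1) /\ regular_seq (f o0) (f o1) /\
  exists k, forall g, in_mpow k g ->
    exists a b c, g = padd (padd (pmul a (f o0)) (pmul b (f o1))) (pmul c (jacdet f)).

Definition ord_eq3 (f : 'I_2 -> ps) : Prop :=
  in_mpow 3 (f o0) /\ in_mpow 3 (f o1) /\ ~ (in_mpow 4 (f o0) /\ in_mpow 4 (f o1)).

Definition jcoord (k : nat) := {t : 'I_2 * nat * nat | (t.1.2 + t.2 <= k)%N}.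
Definition jet (k : nat) (f : 'I_2 -> ps) : jcoord k -> F :=
  fun c => f (val c).1.1 (val c).1.2 (val c).2.

Definition Korbit (k : nat) (p q : jcoord k -> F) : Prop :=
  exists (g : 'I_2 -> ps) (U : pmat) (phi : ps -> ps),
    jet k g = p /\ GL2 U /\ is_aut phi /\ q = jet k (kact U phi g).

End Defs.
Arguments pzero {F}. Arguments pconst {F}. Arguments pone {F}. Arguments padd {F}.
Arguments pneg {F}. Arguments pscale {F}. Arguments pmul {F}. Arguments mono {F}.
Arguments pdx {F}. Arguments pdy {F}. Arguments in_mpow {F}. Arguments vec2 {F}.
Arguments mat_vec {F}. Arguments mat_mul {F}. Arguments mat_one {F}. Arguments GL2 {F}.
Arguments is_aut {F}. Arguments kact {F}. Arguments jacdet {F}. Arguments regular_seq {F}.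
Arguments ICIS {F}. Arguments ord_eq3 {F}. Arguments jet {F} k f _. Arguments Korbit {F} k p q.

Section Zariski.
Variables (F : fieldType) (V : Type).

Inductive pexpr : Type :=
| PVar of V | PConst of F | PAdd of pexpr & pexpr | PMul of pexpr & pexpr.

Fixpoint peval (x : V -> F) (p : pexpr) : F :=
  match p with
  | PVar v => x v
  | PConst c => c
  | PAdd p q => peval x p + peval x q
  | PMul p q => peval x p * peval x q
  end.

Definition pt := V -> F.
Definition subs (A B : pt -> Prop) := forall x, A x -> B x.

Definition zclosed (Z : pt -> Prop) : Prop :=
  exists P : pexpr -> Prop, forall x, Z x <-> (forall p, P p -> peval x p = 0).
Definition zopen (U : pt -> Prop) : Prop := zclosed (fun x => ~ U x).
Definition zclosure (S : pt -> Prop) : pt -> Prop :=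
  fun x => forall Z, zclosed Z -> subs S Z -> Z x.
Definition zirreducible (Z : pt -> Prop) : Prop :=
  zclosed Z /\ (exists x, Z x) /\
  forall Z1 Z2, zclosed Z1 -> zclosed Z2 -> subs Z (fun x => Z1 x \/ Z2 x) ->
    subs Z Z1 \/ subs Z Z2.

Definition has_chain (S : pt -> Prop) (n : nat) : Prop :=
  exists Zs : nat -> pt -> Prop,
    (forall i, (i <= n)%N -> zirreducible (Zs i) /\ subs (Zs i) (zclosure S)) /\
    (forall i, (i < n)%N -> subs (Zs i) (Zs i.+1) /\ exists x, Zs i.+1 x /\ ~ Zs i x).

Definition dim_is (S : pt -> Prop) (n : nat) : Prop :=
  has_chain S n /\ ~ has_chain S n.+1.

(* Modality (Greuel-Nguyen): for U open,
   G-mod(U) = max_t (dim U(t) - t), U(t) = {y in U | dim G.y = t},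
   and G-mod(x) = min over open neighbourhoods U of x of G-mod(U).
   The group action is given through its orbit relation. *)
Definition stratum (orb : pt -> pt -> Prop) (U : pt -> Prop) (t : nat) : pt -> Prop :=
  fun y => U y /\ dim_is (orb y) t.

Definition mod_open_is (orb : pt -> pt -> Prop) (U : pt -> Prop) (v : int) : Prop :=
  (exists t d, (exists y, stratum orb U t y) /\ dim_is (stratum orb U t) d /\
               v = (d%:Z - t%:Z)%R) /\
  (forall t d, (exists y, stratum orb U t y) -> dim_is (stratum orb U t) d ->
               ((d%:Z - t%:Z) <= v)%R).

Definition modality_is (orb : pt -> pt -> Prop) (x : pt) (m : int) : Prop :=
  (exists U, zopen U /\ U x /\ mod_open_is orb U m) /\
  (forall U v, zopen U -> U x -> mod_open_is orb U v -> (m <= v)%R).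

End Zariski.
Arguments PVar {F V}. Arguments PConst {F V}. Arguments peval {F V}. Arguments zclosed {F V}.
Arguments zopen {F V}. Arguments zclosure {F V}. Arguments zirreducible {F V}.
Arguments has_chain {F V}. Arguments dim_is {F V}. Arguments stratum {F V}.
Arguments mod_open_is {F V}. Arguments modality_is {F V}.

Definition unimodal (F : closedFieldType) (f : 'I_2 -> ps F) : Prop :=
  exists k0, forall k, (k0 <= k)%N ->
    modality_is (Korbit k) (jet k f) 1%R.

Definition nf_list (F : closedFieldType) (g : 'I_2 -> ps F) : Prop :=
  let x3 := mono 3 0 in let x2y := mono 2 1 in
  let xy2 := mono 1 2 in let y3 := mono 0 3 in
  let z := @pzero F in
     g = vec2 x3 z
  \/ g = vec2 x3 x2y
  \/ g = vec2 x3 xy2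
  \/ g = vec2 x3 (padd y3 xy2)
  \/ g = vec2 x3 (padd y3 x2y)
  \/ g = vec2 x3 y3
  \/ g = vec2 x2y z
  \/ g = vec2 x2y xy2
  \/ g = vec2 x2y (padd x3 xy2)
  \/ g = vec2 x2y (padd y3 xy2)
  \/ (exists lam : F, lam != 1 /\ g = vec2 (padd x3 x2y) (padd y3 (pscale lam xy2)))
  \/ g = vec2 (padd x3 xy2) z.
Arguments unimodal {F}. Arguments nf_list {F}.

From mathcomp Require Import all_boot all_order all_algebra.
From mathcomp Require Import ring zify.
From Stdlib Require Import FunctionalExtensionality Relation_Operators.
Import GRing.Theory.
Local Open Scope ring_scope.

(* A 3-jet of order 3 is a pair of binary cubics, i.e. a basis of a pencil of cubics.  Constant invertible matrices change the basis of the pencil, and the linear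
   substitutions (x, y) -> (y, x), (al x, be y), (x + t y, y) are automorphisms of F[[x, y]]
   acting on the cubics.  With these moves one member of the pencil becomes x^3, x^2 y or
   x^3 + x y^2 (a triple root, a double root, or three simple roots), and the other is then
   normalised modulo the first by the substitutions fixing it; the roots needed along the
   way exist because F is algebraically closed.  Characteristic 3 enters through
   (x + t y)^3 = x^3 + t^3 y^3: a shear in x does not create x^2 y-terms. *)

(* [(A, B, C, D)] stands for the binary cubic [A x^3 + B x^2 y + C x y^2 + D y^3]. *)
Definition cubic (R : Type) := (R * R * R * R)%type.

Section CubicMoves.
Context {F : fieldType}.
Implicit Types (P Q : cubic F) (a b c d al be t : F).

Definition cubic_comb a b P Q : cubic F :=
  (a * P.1.1.1 + b * Q.1.1.1, a * P.1.1.2 + b * Q.1.1.2,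
   a * P.1.2 + b * Q.1.2, a * P.2 + b * Q.2).

Lemma cubic_comb_fst P Q : cubic_comb 1 0 P Q = P.
Proof. by case: P => [[[? ?] ?] ?]; rewrite /cubic_comb /= !mul0r !mul1r !addr0. Qed.

Lemma cubic_comb_snd P Q : cubic_comb 0 1 P Q = Q.
Proof. by case: Q => [[[? ?] ?] ?]; rewrite /cubic_comb /= !mul0r !mul1r !add0r. Qed.

(* [P (y, x)], [P (al x, be y)] and [P (x + t y, y)]. *)
Definition cubic_swap P : cubic F := (P.2, P.1.2, P.1.1.2, P.1.1.1).

Definition cubic_scale al be P : cubic F :=
  (al ^+ 3 * P.1.1.1, al ^+ 2 * be * P.1.1.2, al * be ^+ 2 * P.1.2, be ^+ 3 * P.2).

Definition cubic_shear t P : cubic F :=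
  (P.1.1.1, 3%:R * t * P.1.1.1 + P.1.1.2,
   3%:R * t ^+ 2 * P.1.1.1 + 2%:R * t * P.1.1.2 + P.1.2,
   t ^+ 3 * P.1.1.1 + t ^+ 2 * P.1.1.2 + t * P.1.2 + P.2).

Definition cubic_yshear t P : cubic F := cubic_swap (cubic_shear t (cubic_swap P)).

Inductive cubic_move : cubic F * cubic F -> cubic F * cubic F -> Prop :=
| move_comb a b c d P Q : a * d - b * c != 0 ->
    cubic_move (P, Q) (cubic_comb a b P Q, cubic_comb c d P Q)
| move_swap P Q : cubic_move (P, Q) (cubic_swap P, cubic_swap Q)
| move_scale al be P Q : al != 0 -> be != 0 ->
    cubic_move (P, Q) (cubic_scale al be P, cubic_scale al be Q)
| move_shear t P Q : cubic_move (P, Q) (cubic_shear t P, cubic_shear t Q).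

Definition cubic_reach := clos_refl_trans (cubic F * cubic F) cubic_move.

Inductive cubic_nf : cubic F -> cubic F -> Prop :=
| nf_x3 : cubic_nf (1, 0, 0, 0) (0, 0, 0, 0)
| nf_x3_x2y : cubic_nf (1, 0, 0, 0) (0, 1, 0, 0)
| nf_x3_xy2 : cubic_nf (1, 0, 0, 0) (0, 0, 1, 0)
| nf_x3_y3xy2 : cubic_nf (1, 0, 0, 0) (0, 0, 1, 1)
| nf_x3_y3x2y : cubic_nf (1, 0, 0, 0) (0, 1, 0, 1)
| nf_x3_y3 : cubic_nf (1, 0, 0, 0) (0, 0, 0, 1)
| nf_x2y : cubic_nf (0, 1, 0, 0) (0, 0, 0, 0)
| nf_x2y_xy2 : cubic_nf (0, 1, 0, 0) (0, 0, 1, 0)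
| nf_x2y_x3xy2 : cubic_nf (0, 1, 0, 0) (1, 0, 1, 0)
| nf_x2y_y3xy2 : cubic_nf (0, 1, 0, 0) (0, 0, 1, 1)
| nf_x3x2y_y3xy2 lam : lam != 1 -> cubic_nf (1, 1, 0, 0) (0, 0, lam, 1)
| nf_x3xy2 : cubic_nf (1, 0, 1, 0) (0, 0, 0, 0).

Definition has_nf P Q := exists P' Q', cubic_nf P' Q' /\ cubic_reach (P, Q) (P', Q').

Lemma has_nf_nf P Q : cubic_nf P Q -> has_nf P Q.
Proof. by exists P, Q; split; last exact: rt_refl. Qed.

Lemma has_nf_move P Q P' Q' :
  cubic_move (P, Q) (P', Q') -> has_nf P' Q' -> has_nf P Q.
Proof.
move=> mv [P'' [Q'' [nf r]]]; exists P'', Q''; split => //.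
exact: rt_trans (rt_step _ _ _ _ mv) r.
Qed.

Lemma has_nf_comb a b c d P' Q' P Q : a * d - b * c != 0 ->
  cubic_comb a b P Q = P' -> cubic_comb c d P Q = Q' -> has_nf P' Q' -> has_nf P Q.
Proof. by move=> det <- <-; apply: has_nf_move; constructor. Qed.

Lemma has_nf_swap P Q : has_nf (cubic_swap P) (cubic_swap Q) -> has_nf P Q.
Proof. by apply: has_nf_move; constructor. Qed.

Lemma has_nf_scale al be P' Q' P Q : al != 0 -> be != 0 ->
  cubic_scale al be P = P' -> cubic_scale al be Q = Q' -> has_nf P' Q' -> has_nf P Q.
Proof. by move=> al0 be0 <- <-; apply: has_nf_move; constructor. Qed.

Lemma has_nf_shear t P' Q' P Q :
  cubic_shear t P = P' -> cubic_shear t Q = Q' -> has_nf P' Q' -> has_nf P Q.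
Proof. by move=> <- <-; apply: has_nf_move; constructor. Qed.

Lemma has_nf_yshear t P' Q' P Q :
  cubic_yshear t P = P' -> cubic_yshear t Q = Q' -> has_nf P' Q' -> has_nf P Q.
Proof.
move=> <- <- h; apply: has_nf_swap; apply: (has_nf_shear t _ _ _ _ erefl erefl).
exact: has_nf_swap.
Qed.

End CubicMoves.

Section Roots.
Context {F : closedFieldType}.

Lemma monic_root2 (c0 c1 : F) : exists x, x ^+ 2 + c1 * x + c0 = 0.
Proof.
have [x Hx] := @solve_monicpoly F 2 (fun i => - [:: c0; c1]`_i) erefl.
by exists x; rewrite Hx !big_ord_recl big_ord0 /=; ring.
Qed.

Lemma monic_root3 (c0 c1 c2 : F) : exists x, x ^+ 3 + c2 * x ^+ 2 + c1 * x + c0 = 0.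
Proof.
have [x Hx] := @solve_monicpoly F 3 (fun i => - [:: c0; c1; c2]`_i) erefl.
by exists x; rewrite Hx !big_ord_recl big_ord0 /=; ring.
Qed.

Lemma monic_root4 (c0 c1 c2 c3 : F) :
  exists x, x ^+ 4 + c3 * x ^+ 3 + c2 * x ^+ 2 + c1 * x + c0 = 0.
Proof.
have [x Hx] := @solve_monicpoly F 4 (fun i => - [:: c0; c1; c2; c3]`_i) erefl.
by exists x; rewrite Hx !big_ord_recl big_ord0 /=; ring.
Qed.

Lemma exists_root_pow n (a : F) : (0 < n)%N -> a != 0 -> exists2 x, x ^+ n = a & x != 0.
Proof.
move=> n0 a0; have [x Hx] := @solve_monicpoly F n (fun i => if i == 0%N then a else 0) n0.
have xa : x ^+ n = a.
  rewrite Hx -(prednK n0) big_ord_recl /= mulr1 big1 ?addr0 // => i _.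
  by rewrite mul0r.
by exists x => //; apply: contra_neq a0 => x0; rewrite -xa x0 expr0n eqn0Ngt n0.
Qed.

Lemma exists_cubic_root (a b c d : F) : [|| a != 0, b != 0 | c != 0] ->
  exists t, a * t ^+ 3 + b * t ^+ 2 + c * t + d = 0.
Proof.
have [-> | a0] /= := eqVneq a 0.
  have [-> | b0] /= := eqVneq b 0.
    by move=> c0; exists (- d / c); field.
  have [x Hx] := monic_root2 (d / b) (c / b).
  by exists x; transitivity (b * (x ^+ 2 + c / b * x + d / b)); [field | rewrite Hx mulr0].
have [x Hx] := monic_root3 (d / a) (c / a) (b / a).
exists x; transitivity (a * (x ^+ 3 + b / a * x ^+ 2 + c / a * x + d / a)); first by field.
by rewrite Hx mulr0.
Qed.

Lemma exists_quartic_root (a b c d e : F) : (a != 0) || (b != 0) ->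
  exists u, a * u ^+ 4 + b * u ^+ 3 + c * u ^+ 2 + d * u + e = 0.
Proof.
have [-> /= b0 | a0 _] := eqVneq a 0.
  have [u Hu] := @exists_cubic_root b c d e ltac:(by rewrite b0).
  by exists u; rewrite mul0r add0r.
have [u Hu] := monic_root4 (e / a) (d / a) (c / a) (b / a).
exists u; transitivity (a * (u ^+ 4 + b / a * u ^+ 3 + c / a * u ^+ 2 + d / a * u + e / a)).
  by field.
by rewrite Hu mulr0.
Qed.

(* [l] is the modulus of the family [(x^3 + x^2 y, y^3 + l x y^2)]. *)
Lemma exists_pencil_modulus (b : F) :
  exists l g, [/\ l != 1, g != 0, g ^+ 3 = l - 1 & g * b = l].
Proof.
have [l Hl] := monic_root3 (b ^+ 3) (- b ^+ 3) 0.
have l1 : l != 1.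
  by apply: contra_eq_neq Hl => ->; rewrite mul0r addr0 mulr1 expr1n subrK oner_neq0.
exists l; have [l0 | l0] := eqVneq l 0.
  have b0 : b = 0.
    have b3 : b ^+ 3 = 0 by rewrite -Hl l0; ring.
    by move/eqP: b3; rewrite expf_eq0 => /eqP.
  by exists (-1); split => //; rewrite ?oppr_eq0 ?oner_neq0 ?b0 ?l0 //; ring.
have b0 : b != 0.
  apply: contra_neq l0 => b0; have l3 : l ^+ 3 = 0 by rewrite -Hl b0; ring.
  by move/eqP: l3; rewrite expf_eq0 => /eqP.
exists (l / b); split => //; rewrite ?mulf_neq0 ?invr_neq0 //; last by field.
apply/eqP; rewrite -subr_eq0; apply/eqP.
transitivity ((l ^+ 3 + 0 * l ^+ 2 + - b ^+ 3 * l + b ^+ 3) / b ^+ 3); first by field.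
by rewrite Hl mul0r.
Qed.

End Roots.

Section Classification.
Context {F : closedFieldType}.
Hypothesis char3 : 3%:R = 0 :> F.
Implicit Types (P Q : cubic F) (A B C D : F).

Lemma two_eqN1 : 2%:R = -1 :> F.
Proof. by apply/eqP; rewrite -subr_eq0 opprK; apply/eqP; ring: char3. Qed.

Lemma cubic_shear3 t A B C D : cubic_shear t (A, B, C, D) =
  (A, B, C - t * B, t ^+ 3 * A + t ^+ 2 * B + t * C + D).
Proof. by rewrite /cubic_shear /= char3 two_eqN1; congr (_, _, _, _); ring. Qed.

Lemma cubic_yshear3 t A B C D : cubic_yshear t (A, B, C, D) =
  (A + t * B + t ^+ 2 * C + t ^+ 3 * D, B - t * C, C, D).
Proof. by rewrite /cubic_yshear /cubic_swap cubic_shear3 /=; congr (_, _, _, _); ring. Qed.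

Lemma det_tri (a c d : F) : (a * d - 0 * c != 0) = (a != 0) && (d != 0).
Proof. by rewrite mul0r subr0 mulf_eq0 negb_or. Qed.

Lemma det_anti (b c : F) : (0 * 0 - b * c != 0) = (b != 0) && (c != 0).
Proof. by rewrite mul0r sub0r oppr_eq0 mulf_eq0 negb_or. Qed.

Ltac nz := repeat (apply/andP; split);
  rewrite ?(mulf_neq0, expf_neq0, invr_neq0, oner_neq0, oppr_eq0) //.
Ltac det_nz := rewrite ?det_tri ?det_anti; nz.
Ltac field_nz := field; nz.
Ltac cubic_eq :=
  rewrite ?cubic_shear3 ?cubic_yshear3 /cubic_comb /cubic_scale /cubic_swap /=;
  congr (_, _, _, _).

Lemma has_nf_x3_y3xy2 C D : has_nf (1, 0, 0, 0) (0, 0, C, D).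
Proof.
have [-> | C0] := eqVneq C 0.
  have [-> | D0] := eqVneq D 0; first exact/has_nf_nf/nf_x3.
  apply: (has_nf_comb 1 0 0 D^-1 (1, 0, 0, 0) (0, 0, 0, 1));
    [det_nz | cubic_eq; ring | cubic_eq; field_nz | exact/has_nf_nf/nf_x3_y3].
have [-> | D0] := eqVneq D 0.
  apply: (has_nf_comb 1 0 0 C^-1 (1, 0, 0, 0) (0, 0, 1, 0));
    [det_nz | cubic_eq; ring | cubic_eq; field_nz | exact/has_nf_nf/nf_x3_xy2].
pose al := D / C.
apply: (has_nf_scale al 1 (al ^+ 3, 0, 0, 0) (0, 0, D, D));
  [rewrite /al; nz | nz | cubic_eq; ring | cubic_eq; rewrite /al; field_nz |].
apply: (has_nf_comb (al ^- 3) 0 0 D^-1 (1, 0, 0, 0) (0, 0, 1, 1));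
  [rewrite /al; det_nz | cubic_eq; rewrite /al; field_nz | cubic_eq; field_nz |
   exact/has_nf_nf/nf_x3_y3xy2].
Qed.

Lemma has_nf_x3 Q : has_nf (1, 0, 0, 0) Q.
Proof.
case: Q => [[[A B] C] D].
apply: (has_nf_comb 1 0 (- A) 1 (1, 0, 0, 0) (0, B, C, D));
  [det_nz | cubic_eq; ring | cubic_eq; ring |].
have [C0 | C0] := eqVneq C 0; last first.
  pose s := B / C; pose E := s * B + s ^+ 2 * C + s ^+ 3 * D.
  apply: (has_nf_yshear s (1, 0, 0, 0) (E, 0, C, D));
    [cubic_eq; ring | cubic_eq; rewrite /E; try ring; rewrite /s; field_nz |].
  apply: (has_nf_comb 1 0 (- E) 1 (1, 0, 0, 0) (0, 0, C, D));
    [det_nz | cubic_eq; ring | cubic_eq; ring | exact: has_nf_x3_y3xy2].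
rewrite C0; have [-> | B0] := eqVneq B 0; first exact: has_nf_x3_y3xy2.
have [-> | D0] := eqVneq D 0.
  apply: (has_nf_comb 1 0 0 B^-1 (1, 0, 0, 0) (0, 1, 0, 0));
    [det_nz | cubic_eq; ring | cubic_eq; field_nz | exact/has_nf_nf/nf_x3_x2y].
have [al Hal al0] := @exists_root_pow _ 2 (D / B) isT ltac:(nz).
apply: (has_nf_scale al 1 (al ^+ 3, 0, 0, 0) (0, D, 0, D));
  [nz | nz | cubic_eq; ring | cubic_eq; rewrite ?mulr1 ?Hal; try ring; field_nz |].
apply: (has_nf_comb (al ^- 3) 0 0 D^-1 (1, 0, 0, 0) (0, 1, 0, 1));
  [det_nz | cubic_eq; field_nz | cubic_eq; field_nz | exact/has_nf_nf/nf_x3_y3x2y].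
Qed.

Lemma has_nf_x2y_y3xy2 C D : has_nf (0, 1, 0, 0) (0, 0, C, D).
Proof.
have [-> | C0] := eqVneq C 0.
  have [-> | D0] := eqVneq D 0; first exact/has_nf_nf/nf_x2y.
  apply: has_nf_swap.
  apply: (has_nf_comb 0 D^-1 1 0 (1, 0, 0, 0) (0, 0, 1, 0));
    [det_nz | cubic_eq; field_nz | cubic_eq; ring | exact/has_nf_nf/nf_x3_xy2].
have [-> | D0] := eqVneq D 0.
  apply: (has_nf_comb 1 0 0 C^-1 (0, 1, 0, 0) (0, 0, 1, 0));
    [det_nz | cubic_eq; ring | cubic_eq; field_nz | exact/has_nf_nf/nf_x2y_xy2].
pose al := D / C.
apply: (has_nf_scale al 1 (0, al ^+ 2, 0, 0) (0, 0, D, D));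
  [rewrite /al; nz | nz | cubic_eq; ring | cubic_eq; rewrite /al; field_nz |].
apply: (has_nf_comb (al ^- 2) 0 0 D^-1 (0, 1, 0, 0) (0, 0, 1, 1));
  [rewrite /al; det_nz | cubic_eq; rewrite /al; field_nz | cubic_eq; field_nz |
   exact/has_nf_nf/nf_x2y_y3xy2].
Qed.

Lemma has_nf_x2y_x3xy2 A C : A != 0 -> has_nf (0, 1, 0, 0) (A, 0, C, 0).
Proof.
move=> A0; have [-> | C0] := eqVneq C 0.
  apply: (has_nf_comb 0 A^-1 1 0 (1, 0, 0, 0) (0, 1, 0, 0));
    [det_nz | cubic_eq; field_nz | cubic_eq; ring | exact/has_nf_nf/nf_x3_x2y].
have [be Hbe be0] := @exists_root_pow _ 2 (A / C) isT ltac:(nz).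
apply: (has_nf_scale 1 be (0, be, 0, 0) (A, 0, A, 0));
  [nz | nz | cubic_eq; ring | cubic_eq; rewrite ?mul1r ?Hbe; try ring; field_nz |].
apply: (has_nf_comb be^-1 0 0 A^-1 (0, 1, 0, 0) (1, 0, 1, 0));
  [det_nz | cubic_eq; field_nz | cubic_eq; field_nz | exact/has_nf_nf/nf_x2y_x3xy2].
Qed.

Lemma has_nf_x2y_x3y3 A C D : A != 0 -> D != 0 -> has_nf (0, 1, 0, 0) (A, 0, C, D).
Proof.
move=> A0 D0; have [al Hal al0] := @exists_root_pow _ 3 A^-1 isT ltac:(nz).
have [be Hbe be0] := @exists_root_pow _ 3 D^-1 isT ltac:(nz).
pose b := al * be ^+ 2 * C.
apply: (has_nf_scale al be (0, al ^+ 2 * be, 0, 0) (1, 0, b, 1));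
  [nz | nz | cubic_eq; ring | cubic_eq; rewrite ?Hal ?Hbe /b; try ring; field_nz |].
apply: (has_nf_comb (al ^+ 2 * be)^-1 0 0 1 (0, 1, 0, 0) (1, 0, b, 1));
  [det_nz | cubic_eq; try ring; field_nz | cubic_eq; ring |].
have [l [g [l1 g0 g3 gb]]] := exists_pencil_modulus b.
apply: (has_nf_scale g 1 (0, g ^+ 2, 0, 0) (l - 1, 0, l, 1));
  [nz | nz | cubic_eq; ring | cubic_eq; rewrite -?g3 -?gb; ring |].
apply: (has_nf_comb (g ^- 2) 0 0 1 (0, 1, 0, 0) (l - 1, 0, l, 1));
  [det_nz | cubic_eq; try ring; field_nz | cubic_eq; ring |].
apply: (has_nf_yshear 1 (1, 1, 0, 0) (2%:R * l, 2%:R * l, l, 1));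
  [cubic_eq; ring | cubic_eq; try ring; rewrite two_eqN1; ring |].
apply: (has_nf_comb 1 0 (- (2%:R * l)) 1 (1, 1, 0, 0) (0, 0, l, 1));
  [det_nz | cubic_eq; ring | cubic_eq; ring | exact/has_nf_nf/nf_x3x2y_y3xy2].
Qed.

Lemma has_nf_x2y Q : has_nf (0, 1, 0, 0) Q.
Proof.
case: Q => [[[A B] C] D].
apply: (has_nf_comb 1 0 (- B) 1 (0, 1, 0, 0) (A, 0, C, D));
  [det_nz | cubic_eq; ring | cubic_eq; ring |].
have [-> | A0] := eqVneq A 0; first exact: has_nf_x2y_y3xy2.
have [-> | D0] := eqVneq D 0; first exact: has_nf_x2y_x3xy2.
exact: has_nf_x2y_x3y3.
Qed.

Lemma has_nf_x3xy2 Q : has_nf (1, 0, 1, 0) Q.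
Proof.
case: Q => [[[A B] C'] D].
apply: (has_nf_comb 1 0 (- A) 1 (1, 0, 1, 0) (0, B, C' - A, D));
  [det_nz | cubic_eq; ring | cubic_eq; ring |].
move: (C' - A) => C; have [BC0 | BC0] := boolP ((B == 0) && (C == 0)).
  case/andP: BC0 => /eqP-> /eqP->; have [-> | D0] := eqVneq D 0.
    exact/has_nf_nf/nf_x3xy2.
  apply: has_nf_swap.
  apply: (has_nf_comb 0 D^-1 1 0 (1, 0, 0, 0) (0, 1, 0, 1));
    [det_nz | cubic_eq; field_nz | cubic_eq; ring | exact/has_nf_nf/nf_x3_y3x2y].
(* [u] makes the shear [x -> x + u y] of [t (x^3 + x y^2) + Q] lose its [x y^2] and [y^3] terms *)
have [u Hu] : exists u, B * u ^+ 4 + (- C) * u ^+ 3 + (2%:R * B) * u ^+ 2 + 0 * u + D = 0.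
  by apply: exists_quartic_root; rewrite oppr_eq0 -negb_and.
pose t := B * u - C.
apply: (has_nf_comb t 1 1 0 (t, B, t + C, D) (1, 0, 1, 0));
  [by rewrite mulr0 mul1r sub0r oppr_eq0 oner_neq0 | cubic_eq; ring | cubic_eq; ring |].
apply: (has_nf_shear u (t, B, 0, 0) (1, 0, 1, u ^+ 3 + u));
  [cubic_eq; rewrite /t; [ring | rewrite -Hu; ring] | cubic_eq; ring |].
have [B0 | B0] := eqVneq B 0.
  have t0 : t != 0 by rewrite /t B0 mul0r sub0r oppr_eq0; move: BC0; rewrite B0 eqxx.
  apply: (has_nf_comb t^-1 0 0 1 (1, 0, 0, 0) (1, 0, 1, u ^+ 3 + u));
    [det_nz | cubic_eq; rewrite ?B0; try ring; field_nz | cubic_eq; ring | exact: has_nf_x3].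
apply: (has_nf_yshear (- t / B) (0, B, 0, 0) (cubic_yshear (- t / B) (1, 0, 1, u ^+ 3 + u)));
  [cubic_eq; field_nz | by [] |].
apply: (has_nf_comb B^-1 0 0 1 (0, 1, 0, 0) (cubic_yshear (- t / B) (1, 0, 1, u ^+ 3 + u)));
  [det_nz | cubic_eq; try ring; field_nz | cubic_eq; ring | exact: has_nf_x2y].
Qed.

Lemma has_nf_no_y3 A B C Q : (A, B, C, 0) != (0, 0, 0, 0) :> cubic F -> has_nf (A, B, C, 0) Q.
Proof.
move=> P0; have [C0 | C0] := eqVneq C 0; last first.
  pose s := B / C; pose E := A + s * B + s ^+ 2 * C.
  apply: (has_nf_yshear s (E, 0, C, 0) (cubic_yshear s Q));
    [cubic_eq; rewrite /E; try ring; rewrite /s; field_nz | by [] |].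
  have [-> | E0] := eqVneq E 0.
    apply: has_nf_swap.
    apply: (has_nf_comb C^-1 0 0 1 (0, 1, 0, 0) (cubic_swap (cubic_yshear s Q)));
      [det_nz | cubic_eq; field_nz | exact: cubic_comb_snd | exact: has_nf_x2y].
  have [be Hbe be0] := @exists_root_pow _ 2 (E / C) isT ltac:(nz).
  apply: (has_nf_scale 1 be (E, 0, E, 0) (cubic_scale 1 be (cubic_yshear s Q)));
    [nz | nz | cubic_eq; try ring; rewrite mul1r Hbe; field_nz | by [] |].
  apply: (has_nf_comb E^-1 0 0 1 (1, 0, 1, 0) (cubic_scale 1 be (cubic_yshear s Q)));
    [det_nz | cubic_eq; field_nz | exact: cubic_comb_snd | exact: has_nf_x3xy2].
move: P0; rewrite C0; have [-> P0 | B0 _] := eqVneq B 0.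
  have A0 : A != 0 by apply: contra_neq P0 => ->.
  apply: (has_nf_comb A^-1 0 0 1 (1, 0, 0, 0) Q);
    [det_nz | cubic_eq; field_nz | exact: cubic_comb_snd | exact: has_nf_x3].
apply: (has_nf_yshear (- A / B) (0, B, 0, 0) (cubic_yshear (- A / B) Q));
  [cubic_eq; field_nz | by [] |].
apply: (has_nf_comb B^-1 0 0 1 (0, 1, 0, 0) (cubic_yshear (- A / B) Q));
  [det_nz | cubic_eq; field_nz | exact: cubic_comb_snd | exact: has_nf_x2y].
Qed.

Lemma has_nf_nonzero P Q : P != (0, 0, 0, 0) -> has_nf P Q.
Proof.
case: P => [[[A B] C] D] P0; have [D0 | D0] := eqVneq D 0.
  by move: P0; rewrite D0; apply: has_nf_no_y3.
have [ABC0 | ABC0] := boolP [&& A == 0, B == 0 & C == 0].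
  case/and3P: ABC0 => /eqP-> /eqP-> /eqP->; apply: has_nf_swap.
  apply: (has_nf_comb D^-1 0 0 1 (1, 0, 0, 0) (cubic_swap Q));
    [det_nz | cubic_eq; field_nz | exact: cubic_comb_snd | exact: has_nf_x3].
have [t Ht] : exists t, A * t ^+ 3 + B * t ^+ 2 + C * t + D = 0.
  by apply: exists_cubic_root; move: ABC0; rewrite !negb_and.
apply: (has_nf_shear t (A, B, C - t * B, 0) (cubic_shear t Q));
  [cubic_eq; rewrite -Ht; ring | by [] |].
apply: has_nf_no_y3; apply: contraNneq ABC0 => -[-> -> /eqP].
by rewrite mulr0 subr0 !eqxx.
Qed.

Theorem cubic_pair_has_nf P Q :
  (P != (0, 0, 0, 0)) || (Q != (0, 0, 0, 0)) -> has_nf P Q.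
Proof.
case/orP => [P0 | Q0]; first exact: has_nf_nonzero.
apply: (has_nf_comb 0 1 1 0 Q P);
  [det_nz | exact: cubic_comb_snd | exact: cubic_comb_fst | exact: has_nf_nonzero].
Qed.

End Classification.

Section ContactMoves.
Context {F : closedFieldType}.
Local Notation ps := (ps F).
Implicit Types (u v : ps) (g : 'I_2 -> ps) (a b c d : F) (P Q : cubic F).

Lemma ps_ext u v : (forall i j, u i j = v i j) -> u = v.
Proof. by move=> E; do 2 apply: functional_extensionality => ?; apply: E. Qed.

Lemma I2_cases (i : 'I_2) : i = o0 \/ i = o1.
Proof. by case: i => [[|[|//]]] ?; [left | right]; apply: val_inj. Qed.

Lemma pmul_pconstl c u : pmul (pconst c) u = pscale c u.
Proof.
apply: ps_ext => i j; rewrite /pmul /pscale big_ord_recl big_ord_recl /pconst /=.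
rewrite !subn0 big1 ?addr0 => [|b _]; last by rewrite mul0r.
by rewrite big1 ?addr0 // => a _; rewrite big1 // => b _; rewrite mul0r.
Qed.

Lemma in_mpowD k u v : in_mpow k u -> in_mpow k v -> in_mpow k (padd u v).
Proof. by move=> Hu Hv i j ij; rewrite /padd Hu // Hv // addr0. Qed.

Lemma in_mpowZ k c u : in_mpow k u -> in_mpow k (pscale c u).
Proof. by move=> Hu i j ij; rewrite /pscale Hu // mulr0. Qed.

Lemma is_aut_id : is_aut (@id ps).
Proof. by do 4 (split => //); exists id. Qed.

Lemma is_aut_comp (phi psi : ps -> ps) : is_aut phi -> is_aut psi -> is_aut (phi \o psi).
Proof.
move=> [p1 [p2 [p3 [p4 [ip [ip1 ip2]]]]]] [q1 [q2 [q3 [q4 [iq [iq1 iq2]]]]]].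
do ![split] => /= [a b | a b | c a | | ]; rewrite ?q1 ?q2 ?q3 ?q4 ?p1 ?p2 ?p3 ?p4 //.
by exists (iq \o ip); split => x /=; rewrite ?ip1 ?iq1 ?iq2 ?ip2.
Qed.

Lemma is_aut_comb {phi : ps -> ps} : is_aut phi -> forall a b u v,
  phi (padd (pscale a u) (pscale b v)) = padd (pscale a (phi u)) (pscale b (phi v)).
Proof. by case=> [D [_ [Z _]]] a b u v; rewrite D !Z. Qed.

Definition cubic_part u : cubic F := (u 3 0, u 2 1, u 1 2, u 0 3)%N.

Definition has_cubic_jet g (s : cubic F * cubic F) :=
  [/\ in_mpow 3 (g o0), in_mpow 3 (g o1) & (cubic_part (g o0), cubic_part (g o1)) = s].

Lemma has_cubic_jet_eq {g h s} : has_cubic_jet g s -> has_cubic_jet h s ->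
  forall k i j, (i + j <= 3)%N -> g k i j = h k i j.
Proof.
move=> [g0 g1 gs] [h0 h1 hs] k i j; rewrite leq_eqVlt ltnS.
have [Hg Hh cE] : [/\ in_mpow 3 (g k), in_mpow 3 (h k) & cubic_part (g k) = cubic_part (h k)].
  rewrite -hs in gs; case: (I2_cases k) => ->; split => //.
    exact: (congr1 fst gs).
  exact: (congr1 snd gs).
case/orP => [/eqP ij | ij]; last by rewrite Hg // Hh.
move: cE; rewrite /cubic_part => -[E30 E21 E12 E03].
have -> : j = (3 - i)%N by lia.
have : (i <= 3)%N by lia.
by case: i {ij} => [|[|[|[|i]]]].
Qed.

Definition cmat a b c d : pmat F := fun i k =>
  pconst (if i == o0 then if k == o0 then a else b else if k == o0 then c else d).

Lemma GL2_cmat a b c d : a * d - b * c != 0 -> GL2 (cmat a b c d).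
Proof.
move=> det; exists (cmat (d / (a * d - b * c)) (- b / (a * d - b * c))
                         (- c / (a * d - b * c)) (a / (a * d - b * c))).
suff mat_ext U V : (forall i k m n, mat_mul U V i k m n = @mat_one F i k m n) ->
    mat_mul U V = mat_one.
  split; apply: mat_ext => i k m n;
    rewrite /mat_mul /cmat !pmul_pconstl /padd /pscale /mat_one /pone /pzero /pconst;
    case: (I2_cases i) => ->; case: (I2_cases k) => -> /=;
    case: (_ && _); rewrite ?mulr0 ?addr0 //= ?mulr1; field; exact: det.
by move=> E; do 2 apply: functional_extensionality => ?; apply: ps_ext; apply: E.
Qed.

Lemma mat_vec_cmat a b c d g :
  mat_vec (cmat a b c d) g o0 = padd (pscale a (g o0)) (pscale b (g o1)) /\
  mat_vec (cmat a b c d) g o1 = padd (pscale c (g o0)) (pscale d (g o1)).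
Proof. by rewrite /mat_vec /cmat /= !pmul_pconstl. Qed.

Lemma has_cubic_jet_comb a b c d g P Q : has_cubic_jet g (P, Q) ->
  has_cubic_jet (mat_vec (cmat a b c d) g) (cubic_comb a b P Q, cubic_comb c d P Q).
Proof.
case=> g0 g1 [<- <-]; rewrite /has_cubic_jet; have [-> ->] := mat_vec_cmat a b c d g.
by split; do ?[apply: in_mpowD; apply: in_mpowZ].
Qed.

Definition contact_reach (s s' : cubic F * cubic F) :=
  exists a b c d (phi : ps -> ps), [/\ a * d - b * c != 0, is_aut phi &
    forall g, has_cubic_jet g s -> has_cubic_jet (kact (cmat a b c d) phi g) s'].

Lemma contact_reach_comb a b c d P Q : a * d - b * c != 0 ->
  contact_reach (P, Q) (cubic_comb a b P Q, cubic_comb c d P Q).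
Proof.
move=> det; exists a, b, c, d, id.
by split => // [|g]; [exact: is_aut_id | exact: has_cubic_jet_comb].
Qed.

Definition aut_on_cubics (phi : ps -> ps) (T : cubic F -> cubic F) :=
  is_aut phi /\ forall u, in_mpow 3 u -> in_mpow 3 (phi u) /\ cubic_part (phi u) = T (cubic_part u).

Lemma contact_reach_aut phi T P Q : aut_on_cubics phi T -> contact_reach (P, Q) (T P, T Q).
Proof.
move=> [aut onT]; exists 1, 0, 0, 1, phi; split => [||g [g0 g1 [gP gQ]]] //.
  by rewrite mulr1 mulr0 subr0 oner_neq0.
rewrite -(cubic_comb_fst (T P) (T Q)) -{2}(cubic_comb_snd (T P) (T Q)).
have [phi0 T0] := onT _ g0; have [phi1 T1] := onT _ g1.
by apply: has_cubic_jet_comb; split; rewrite //= T0 T1 gP gQ.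
Qed.

Lemma kact_cmat_comp a b c d a' b' c' d' (phi psi : ps -> ps) g : is_aut psi ->
  kact (cmat (a' * a + b' * c) (a' * b + b' * d) (c' * a + d' * c) (c' * b + d' * d))
       (psi \o phi) g = kact (cmat a' b' c' d') psi (kact (cmat a b c d) phi g).
Proof.
move=> aut_psi; apply: functional_extensionality => k.
rewrite /kact /mat_vec /cmat !pmul_pconstl.
case: (I2_cases k) => -> /=; rewrite !(is_aut_comb aut_psi);
  apply: ps_ext => i j; rewrite /padd /pscale /=; ring.
Qed.

Lemma contact_reach_trans s s' s'' :
  contact_reach s s' -> contact_reach s' s'' -> contact_reach s s''.
Proof.
move=> [a [b [c [d [phi [det aut_phi R]]]]]] [a' [b' [c' [d' [psi [det' aut_psi R']]]]]].
exists (a' * a + b' * c), (a' * b + b' * d), (c' * a + d' * c), (c' * b + d' * d), (psi \o phi).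
split => [||g gs]; last by rewrite kact_cmat_comp //; apply/R'/R.
  have -> : (a' * a + b' * c) * (c' * b + d' * d) - (a' * b + b' * d) * (c' * a + d' * c)
    = (a' * d' - b' * c') * (a * d - b * c) by ring.
  by rewrite mulf_neq0.
exact: is_aut_comp.
Qed.

End ContactMoves.

Section LinearCoordinateChanges.
Context {F : closedFieldType}.
Local Notation ps := (ps F).
Implicit Types (u v : ps) (al be t : F).

Definition ps_swap u : ps := fun i j => u j i.

Lemma ps_swap_on_cubics : aut_on_cubics ps_swap cubic_swap.
Proof.
split; last by move=> u Hu; split => // i j ij; rewrite /ps_swap Hu // addnC.
do ![split] => // [u v||]; last by exists ps_swap.
  apply: ps_ext => i j; rewrite /ps_swap /pmul exchange_big /=.
  by apply: eq_bigr => b _; apply: eq_bigr.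
by apply: ps_ext => i j; rewrite /ps_swap /pone /pconst andbC.
Qed.

Definition ps_scale al be u : ps := fun i j => al ^+ i * be ^+ j * u i j.

Lemma ps_scaleM al be u v : ps_scale al be (pmul u v) = pmul (ps_scale al be u) (ps_scale al be v).
Proof.
apply: ps_ext => i j; rewrite /ps_scale /pmul mulr_sumr; apply: eq_bigr => -[a Ha] _ /=.
rewrite mulr_sumr; apply: eq_bigr => -[b Hb] _ /=.
by rewrite -{1}(subnKC (Ha : (a <= i)%N)) -{1}(subnKC (Hb : (b <= j)%N)) !exprD; ring.
Qed.

Lemma ps_scale_on_cubics al be : al != 0 -> be != 0 ->
  aut_on_cubics (ps_scale al be) (cubic_scale al be).
Proof.
move=> al0 be0; split; last first.
  move=> u Hu; split => [i j ij|]; first by rewrite /ps_scale Hu // mulr0.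
  by rewrite /cubic_part /cubic_scale /ps_scale /= !expr0 !mulr1 !mul1r !expr1.
do ![split] => [u v | | c u | |].
- by apply: ps_ext => i j; rewrite /ps_scale /padd mulrDr.
- exact: ps_scaleM.
- by apply: ps_ext => i j; rewrite /ps_scale /pscale; ring.
- by apply: ps_ext => -[|i] [|j]; rewrite /ps_scale /pone /pconst /= ?mulr0 ?mulr1.
exists (ps_scale al^-1 be^-1); split => u; apply: ps_ext => i j; rewrite /ps_scale !exprVn;
  by field; rewrite !expf_neq0.
Qed.

End LinearCoordinateChanges.

Section Shear.
Context {F : closedFieldType}.
Local Notation ps := (ps F).
Local Notation poly2 := {poly {poly F}}.
Implicit Types (u v : ps) (t : F) (P Q : poly2).

(* In [poly2] the outer variable ['X] is [x] and the inner one is [y]. *)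
Definition trunc2 N u : poly2 := \poly_(a < N) \poly_(b < N) u a b.

Lemma coef_trunc2 N u a b :
  (trunc2 N u)`_a`_b = if (a < N)%N && (b < N)%N then u a b else 0.
Proof. by rewrite /trunc2 coef_poly; case: (a < N)%N; rewrite ?coef_poly ?coef0. Qed.

Definition ord_ge d P := forall a b, (a + b < d)%N -> P`_a`_b = 0.

Lemma coef2M P Q i j :
  (P * Q)`_i`_j = \sum_(a < i.+1) \sum_(b < j.+1) P`_a`_b * Q`_(i - a)`_(j - b).
Proof. by rewrite coefM coef_sum; apply: eq_bigr => a _; rewrite coefM. Qed.

Lemma ord_ge_le d e P : (e <= d)%N -> ord_ge d P -> ord_ge e P.
Proof. by move=> ed H a b ab; apply: H; lia. Qed.

Lemma ord_geM d e P Q : ord_ge d P -> ord_ge e Q -> ord_ge (d + e) (P * Q).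
Proof.
move=> HP HQ i j ij; rewrite coef2M big1 // => -[a Ha] _ /=.
rewrite big1 // => -[b Hb] _ /=.
have [abd | abd] := ltnP (a + b) d; first by rewrite HP ?mul0r.
by rewrite HQ ?mulr0 //; lia.
Qed.

Lemma ord_ge_sum d (I : finType) (G : I -> poly2) :
  (forall i, ord_ge d (G i)) -> ord_ge d (\sum_i G i).
Proof. by move=> H a b ab; rewrite !coef_sum big1 // => i _; apply: H. Qed.

Lemma ord_geC d P a : ord_ge d P -> ord_ge (d - a) (P`_a)%:P.
Proof. by move=> H a' b ab; rewrite coefC; case: eqP => [a'0|]; rewrite ?coef0 ?H //; lia. Qed.

Definition Y2 : poly2 := 'X%:P.
Definition xshift t : poly2 := 'X + t%:P%:P * Y2.
Definition shear2 t P := P \Po xshift t.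

Lemma ord_ge_xshiftX t n : ord_ge n (xshift t ^+ n).
Proof.
elim: n => [|n IH]; first by [].
rewrite exprS -add1n; apply: ord_geM => // a b ab.
have [-> ->] : a = 0%N /\ b = 0%N by lia.
by rewrite /xshift /Y2 !coefD coefX coefCM coefC /= coefC /= coefCM coefX mulr0 addr0.
Qed.

Lemma ord_ge_shear2 t {d P} : ord_ge d P -> ord_ge d (shear2 t P).
Proof.
move=> H; rewrite /shear2 comp_polyE; apply: ord_ge_sum => a; rewrite -mul_polyC.
apply: (@ord_ge_le ((d - a) + a)); first lia.
by apply: ord_geM; [apply: ord_geC | apply: ord_ge_xshiftX].
Qed.

Lemma shear2_eq t d P Q a b : ord_ge d (P - Q) -> (a + b < d)%N ->
  (shear2 t P)`_a`_b = (shear2 t Q)`_a`_b.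
Proof.
move=> H ab; apply/eqP; rewrite -subr_eq0 -!coefB -comp_polyB; apply/eqP.
exact: (ord_ge_shear2 t H a b ab).
Qed.

(* The coefficient of [x^i y^j] in [u (x + t y, y)] only involves terms of [u] of
   total degree at most [i + j], so it can be read off any polynomial truncation. *)
Definition ps_shear t u : ps := fun i j => (shear2 t (trunc2 (i + j).+1 u))`_i`_j.

Lemma coef_shear2_trunc t u i j N : (i + j < N)%N ->
  (shear2 t (trunc2 N u))`_i`_j = ps_shear t u i j.
Proof.
move=> ijN; apply: (@shear2_eq t (i + j).+1) => // a b ab.
rewrite !coefB !coef_trunc2.
have [-> -> -> ->] : [/\ a < N, b < N, a < (i + j).+1 & b < (i + j).+1]%N by split; lia.
by rewrite subrr.
Qed.

Lemma trunc2D N u v : trunc2 N (padd u v) = trunc2 N u + trunc2 N v.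
Proof.
apply/polyP => a; rewrite coefD; apply/polyP => b.
by rewrite coefD !coef_trunc2 /padd; case: (_ && _); rewrite ?addr0.
Qed.

Lemma trunc2Z N c u : trunc2 N (pscale c u) = c%:P%:P * trunc2 N u.
Proof.
apply/polyP => a; rewrite coefCM; apply/polyP => b.
by rewrite coefCM !coef_trunc2 /pscale; case: (_ && _); rewrite ?mulr0.
Qed.

Lemma trunc2_1 N : (0 < N)%N -> trunc2 N pone = 1.
Proof.
move=> N0; apply/polyP => a; apply/polyP => b.
rewrite coef_trunc2 coef1 /pone /pconst.
by case: a => [|a]; case: b => [|b]; rewrite /= ?N0 ?coef1 ?coef0 //=; case: ifP.
Qed.

Lemma ps_shearM t u v : ps_shear t (pmul u v) = pmul (ps_shear t u) (ps_shear t v).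
Proof.
apply: ps_ext => i j; set N := (i + j).+1.
rewrite {1}/ps_shear -/N (@shear2_eq t N _ (trunc2 N u * trunc2 N v)) //; last first.
  move=> a b ab; rewrite !coefB coef2M coef_trunc2 /pmul.
  have [-> ->] : (a < N)%N /\ (b < N)%N by lia.
  apply/eqP; rewrite subr_eq0; apply/eqP.
  apply: eq_bigr => -[a' Ha'] _; apply: eq_bigr => -[b' Hb'] _ /=.
  rewrite !coef_trunc2.
  by have [-> -> -> ->] : [/\ a' < N, b' < N, a - a' < N & b - b' < N]%N by split; lia.
rewrite /shear2 comp_polyM coef2M /pmul.
by apply: eq_bigr => -[a Ha] _; apply: eq_bigr => -[b Hb] _ /=; rewrite !coef_shear2_trunc //; lia.
Qed.

Lemma xshiftK t : xshift t \Po xshift (- t) = 'X.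
Proof. by rewrite /xshift /Y2 comp_polyD comp_polyX comp_polyM !comp_polyC !rmorphN /=; ring. Qed.

Lemma ps_shearK t : cancel (ps_shear t) (ps_shear (- t)).
Proof.
move=> u; apply: ps_ext => i j; set N := (i + j).+1.
rewrite {1}/ps_shear -/N (@shear2_eq (- t) N _ (shear2 t (trunc2 N u))) //; last first.
  move=> a b ab; rewrite !coefB coef_trunc2 coef_shear2_trunc //.
  have [-> ->] : (a < N)%N /\ (b < N)%N by lia.
  by rewrite subrr.
rewrite /shear2 -comp_polyA xshiftK comp_polyXr coef_trunc2.
by have [-> ->] : (i < N)%N /\ (j < N)%N by lia.
Qed.

Lemma ps_shear_aut t : is_aut (ps_shear t).
Proof.
do ![split] => [u v | | c u | |].
- by apply: ps_ext => i j; rewrite /ps_shear trunc2D /shear2 comp_polyD !coefD.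
- exact: ps_shearM.
- by apply: ps_ext => i j; rewrite /ps_shear trunc2Z /shear2 comp_polyM comp_polyC !coefCM.
- apply: ps_ext => i j; rewrite /ps_shear trunc2_1 // /shear2 -polyC1 comp_polyC polyC1.
  by rewrite coef1 /pone /pconst; case: i => [|i] /=; [rewrite coef1; case: j | rewrite coef0].
- exists (ps_shear (- t)); split => [|u]; first exact: ps_shearK.
  by rewrite -{1}(opprK t) ps_shearK.
Qed.

Lemma coef_mono2 c m k a b :
  (c%:P%:P * 'X^m * Y2 ^+ k)`_a`_b = if (a == m) && (b == k) then c else 0.
Proof.
rewrite /Y2 -rmorphXn -mulrA [_ * (_ ^+ k)%:P]mulrC mulrA -polyCM coefMXn coefC.
case: (ltngtP a m) => [am | am | ->] /=; first by rewrite coef0.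
  have -> : (a - m == 0)%N = false by rewrite subn_eq0 leqNgt am.
  by rewrite coef0.
by rewrite subnn /= coefCM coefXn; case: (b == k); rewrite ?mulr1 ?mulr0.
Qed.

Definition cubic2 (A B C D : F) : poly2 :=
  A%:P%:P * 'X^3 * Y2 ^+ 0 + B%:P%:P * 'X^2 * Y2 ^+ 1 +
  C%:P%:P * 'X^1 * Y2 ^+ 2 + D%:P%:P * 'X^0 * Y2 ^+ 3.

Lemma shear2_cubic2 t A B C D : shear2 t (cubic2 A B C D) =
  cubic2 A (3%:R * t * A + B) (3%:R * t ^+ 2 * A + 2%:R * t * B + C)
         (t ^+ 3 * A + t ^+ 2 * B + t * C + D).
Proof.
rewrite /shear2 /cubic2 /Y2 !(rmorphD, rmorphM, rmorphXn) /= comp_polyX !comp_polyC.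
by rewrite /xshift /Y2; ring.
Qed.

Lemma ps_shear_on_cubics t : aut_on_cubics (ps_shear t) (cubic_shear t).
Proof.
split=> [|u Hu]; first exact: ps_shear_aut.
have trunc_ord3 : ord_ge 3 (trunc2 3 u).
  by move=> a b ab; rewrite coef_trunc2 Hu //; case: (_ && _).
split=> [i j ij|]; first by rewrite -(@coef_shear2_trunc t u i j 3) // (ord_ge_shear2 t trunc_ord3).
have cubic_coef i j : (i + j = 3)%N ->
    ps_shear t u i j = (shear2 t (cubic2 (u 3 0) (u 2 1) (u 1 2) (u 0 3))%N)`_i`_j.
  move=> ij; rewrite -(@coef_shear2_trunc t u i j 4); last lia.
  apply: (@shear2_eq t 4); last lia.
  move=> a b ab; rewrite !coefB coef_trunc2 /cubic2 !coefD !coef_mono2.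
  have [-> ->] : (a < 4)%N /\ (b < 4)%N by lia.
  by move: a b ab => [|[|[|[|a]]]] [|[|[|[|b]]]] //= _;
    rewrite ?addr0 ?add0r ?subrr ?subr0 // Hu.
by rewrite /cubic_part /cubic_shear !cubic_coef // shear2_cubic2 /cubic2 !coefD !coef_mono2 /=
  !addr0 !add0r.
Qed.

End Shear.

Lemma cubic_reach_contact {F : closedFieldType} {s s' : cubic F * cubic F} :
  cubic_reach s s' -> contact_reach s s'.
Proof.
elim=> {s s'} [x y [a b c d P Q det | P Q | al be P Q al0 be0 | t P Q] | [P Q]
              | s s' s'' _ R _ R'].
- by apply: contact_reach_comb.
- by apply: contact_reach_aut ps_swap_on_cubics.
- by apply/contact_reach_aut/ps_scale_on_cubics.
- by apply: contact_reach_aut (ps_shear_on_cubics t).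
- have := @contact_reach_comb F 1 0 0 1 P Q; rewrite cubic_comb_fst cubic_comb_snd.
  by apply; rewrite mulr1 mulr0 subr0 oner_neq0.
- exact: contact_reach_trans R R'.
Qed.

Section NormalForms.
Context {F : closedFieldType}.

Lemma in_mpow_mono k a b : (k <= a + b)%N -> in_mpow k (@mono F a b).
Proof. by move=> kab i j ij; rewrite /mono; case: eqP => [ia|]; case: eqP => [jb|] //; lia. Qed.

Ltac nf_pick :=
  repeat first [by left | by left; eexists; split; [eassumption | reflexivity] | right];
  try reflexivity.
Ltac nf_jet :=
  split; rewrite /vec2 /=;
    [ repeat first [done | apply: in_mpowD | apply: in_mpowZ | exact: in_mpow_mono] ..
    | by rewrite /cubic_part /mono /padd /pscale /pzero /= ?mulr0 ?mulr1 ?addr0 ?add0r ].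

Lemma cubic_nf_realised {P Q : cubic F} :
  cubic_nf P Q -> exists g, nf_list g /\ has_cubic_jet g (P, Q).
Proof.
case=> [||||||||||lam lam1|];
  [ exists (vec2 (mono 3 0) pzero) | exists (vec2 (mono 3 0) (mono 2 1))
  | exists (vec2 (mono 3 0) (mono 1 2)) | exists (vec2 (mono 3 0) (padd (mono 0 3) (mono 1 2)))
  | exists (vec2 (mono 3 0) (padd (mono 0 3) (mono 2 1))) | exists (vec2 (mono 3 0) (mono 0 3))
  | exists (vec2 (mono 2 1) pzero) | exists (vec2 (mono 2 1) (mono 1 2))
  | exists (vec2 (mono 2 1) (padd (mono 3 0) (mono 1 2)))
  | exists (vec2 (mono 2 1) (padd (mono 0 3) (mono 1 2)))
  | exists (vec2 (padd (mono 3 0) (mono 2 1)) (padd (mono 0 3) (pscale lam (mono 1 2))))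
  | exists (vec2 (padd (mono 3 0) (mono 1 2)) pzero) ];
  (split; [nf_pick | nf_jet]).
Qed.

End NormalForms.

Theorem ord3_jet3_nf {F : closedFieldType} (char3 : 3%:R = 0 :> F) (f : 'I_2 -> ps F) :
  ord_eq3 f -> exists g, nf_list g /\ Korbit 3 (jet 3 f) (jet 3 g).
Proof.
case=> f0 [f1 not_ord4].
have fs : has_cubic_jet f (cubic_part (f o0), cubic_part (f o1)) by [].
have s0 : (cubic_part (f o0) != (0, 0, 0, 0)) || (cubic_part (f o1) != (0, 0, 0, 0)).
  apply: contra_notT not_ord4 => /norP[/negbNE/eqP s10 /negbNE/eqP s20].
  have zero_jet : has_cubic_jet (fun=> @pzero F) ((0, 0, 0, 0), (0, 0, 0, 0)) by [].
  rewrite s10 s20 in fs.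
  by split=> i j ij; rewrite (has_cubic_jet_eq fs zero_jet) //; lia.
have [P' [Q' [nf reach]]] := cubic_pair_has_nf char3 _ _ s0.
have [a [b [c [d [phi [det aut contact]]]]]] := cubic_reach_contact reach.
have [g [g_nf gs]] := cubic_nf_realised nf.
exists g; split => //; exists f, (cmat a b c d), phi.
split=> //; split; [exact: GL2_cmat | split=> //].
apply: functional_extensionality => -[[[k i] j] ij]; rewrite /jet /=.
exact: has_cubic_jet_eq gs (contact f fs) k i j ij.
Qed.

Local Close Scope ring_scope.

Theorem proposition7p1 (F : closedFieldType) (hchar : 3%N \in [pchar F]%R)
  (f : 'I_2 -> ps F) :
  ICIS f -> unimodal f -> ord_eq3 f ->
  exists g : 'I_2 -> ps F, nf_list g /\ Korbit 3 (jet 3 f) (jet 3 g).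
Proof. by move=> _ _; apply: ord3_jet3_nf; exact: pcharf0 hchar. Qed.
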